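(* Let $d\ge 2$ and $C_1>0$. There exist constants $C_2>1$, $c\in(0,1)$ and $0<c'\le C'$, depending only on $d$ and $C_1$, such that the following holds for every finite field $\mathbb F_q$ of characteristic greater than two. Let $E,F\subset\mathbb F_q^d$ and $0\le\beta\le1$, and assume $\max_{x\in\mathbb F_q^d\setminus\{0\}}|E\cap l_x|\le C_1q^{\beta}$. If $|E||F|\ge C_2q^{d+\beta}$, then there exists a set $E_0\subset E$ with $c'q^{-\beta}|E|\le|E_0|\le C'q^{-\beta}|E|$ such that $|\Pi(E_0,F)|\ge c\,q$.
   Context: $\mathbb F_q$ is a finite field with $q$ elements and characteristic greater than two; $\mathbb F_q^*=\mathbb F_q\setminus\{0\}$. For $x\in\mathbb F_q^d\setminus\{0\}$, $l_x=\{sx: s\in\mathbb F_q^*\}$. For $E,F\subset\mathbb F_q^d$, $\Pi(E,F)=\{x\cdot y: x\in E,\ y\in F\}$ with $x\cdot y=\sum_i x_iy_i$. *)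

From Stdlib Require Import Reals.
From mathcomp Require Import all_boot all_order all_algebra.
Set Implicit Arguments. Unset Strict Implicit. Unset Printing Implicit Defensive.
Import GRing.Theory.
Local Open Scope ring_scope.

Definition dotv (K : fieldType) (d : nat) (x y : 'rV[K]_d) : K :=
  \sum_(i < d) x 0 i * y 0 i.

Definition linex (K : finFieldType) (d : nat) (x : 'rV[K]_d) : {set 'rV[K]_d} :=
  [set s *: x | s in [set s : K | s != 0]].

Definition prodset (K : finFieldType) (d : nat) (E F : {set 'rV[K]_d}) : {set K} :=
  [set dotv x y | x in E, y in F].

Definition char_gt2 (K : finFieldType) : Prop :=
  exists p : nat, p \in [pchar K] /\ is_true (leq 3 p).

(* Let collisions v count the pairs (y, y') in F x F with v.y = v.y'.  By
   Cauchy-Schwarz, |F|^2 <= |v.F| * collisions v, and summing over all v in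
   F_q^(n+1), where each pair y <> y' collides on a hyperplane of q^n points,
   gives sum_v collisions v = |F| (q^(n+1) + (|F| - 1) q^n).  If E has one
   point on each line through it, collisions is constant on the (q - 1)|E|
   points of these lines; bounding the other points by |F|^2 / q and using
   |E||F| >= q^(n+1) leaves sum_(x in E) collisions x <= 2 |E| |F|^2 / q,
   while Cauchy-Schwarz with x.F inside Pi(E, F) bounds it below by
   |E| |F|^2 / |Pi(E, F)|.  Hence |Pi(E, F)| >= q / 2.  Such an E0 of size
   about |E| q^(-beta) exists because the line bound C1 q^beta forces E to
   meet at least |E| / (2 C1 q^beta) distinct lines. *)

From Stdlib Require Import Reals ZArith Lra Lia.
From mathcomp Require Import all_boot all_order all_algebra.
From mathcomp Require Import zify.
Set Implicit Arguments. Unset Strict Implicit. Unset Printing Implicit Defensive.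
Import GRing.Theory.

Section DotProduct.
Variables (K : fieldType) (n : nat).
Local Open Scope ring_scope.
Implicit Types x y z : 'rV[K]_n.

Lemma dotvC x y : dotv x y = dotv y x.
Proof. by apply: eq_bigr => i _; rewrite mulrC. Qed.

Lemma dotvDl x y z : dotv (x + y) z = dotv x z + dotv y z.
Proof. by rewrite /dotv -big_split; apply: eq_bigr => i _; rewrite mxE mulrDl. Qed.

Lemma dotvZl s x y : dotv (s *: x) y = s * dotv x y.
Proof. by rewrite /dotv mulr_sumr; apply: eq_bigr => i _; rewrite mxE mulrA. Qed.

Lemma dotvBl x y z : dotv (x - y) z = dotv x z - dotv y z.
Proof. by rewrite dotvDl -scaleN1r dotvZl mulN1r. Qed.

Lemma dotvBr x y z : dotv x (y - z) = dotv x y - dotv x z.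
Proof. by rewrite dotvC dotvBl !(dotvC x). Qed.

Lemma dotv_delta i z : dotv (delta_mx 0 i) z = z 0 i.
Proof.
rewrite /dotv (bigD1 i) //= big1 => [|j ji]; first by rewrite !mxE !eqxx mul1r addr0.
by rewrite !mxE (negbTE ji) andbF mul0r.
Qed.

End DotProduct.

Lemma sum_card_fibres (T J : finType) (A : {pred T}) (B : {pred J}) (g : T -> J) :
  {in A, forall x, g x \in B} ->
  \sum_(j in B) #|[set x in A | g x == j]| = #|A|.
Proof.
move=> gAB; rewrite -sum1_card (partition_big g (mem B)) //.
by apply: eq_bigr => j _; rewrite -sum1_card; apply: eq_bigl => x; rewrite inE.
Qed.

Lemma card_sep_sum (T : finType) (A : {pred T}) (p : pred T) :
  #|[set x in A | p x]| = \sum_(x in A) (p x : nat).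
Proof.
rewrite -sum1_card [LHS]big_mkcond [RHS]big_mkcond /=.
by apply: eq_bigr => x _; rewrite inE; case: (x \in A); case: (p x).
Qed.

Lemma sqr_sum_le_card_sum_sqr (T : finType) (A : {pred T}) (g : T -> nat) :
  (\sum_(t in A) g t) ^ 2 <= #|A| * \sum_(t in A) g t ^ 2.
Proof.
have sqr_sum : (\sum_(t in A) g t) ^ 2 = \sum_(s in A) \sum_(t in A) g s * g t.
  by rewrite expnS expn1 big_distrl; apply: eq_bigr => s _; rewrite big_distrr.
have sum_sqr : 2 * (#|A| * \sum_(t in A) g t ^ 2) =
               \sum_(s in A) \sum_(t in A) (g s ^ 2 + g t ^ 2).
  under [RHS]eq_bigr do rewrite big_split /= sum_nat_const.
  by rewrite big_split /= sum_nat_const -big_distrr /= mul2n -addnn.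
rewrite -(leq_pmul2l (isT : 0 < 2)) sqr_sum sum_sqr big_distrr /=.
apply: leq_sum => s _; rewrite big_distrr /=.
by apply: leq_sum => t _; apply: (nat_Cauchy _ _).1.
Qed.

Section Hyperplanes.
Variable K : finFieldType.
Local Open Scope ring_scope.

Lemma card_dotv_fibre_translate n (z : 'rV[K]_n) t : z != 0 ->
  #|[set v | dotv v z == t]| = #|[set v | dotv v z == 0]|.
Proof.
move=> z_neq0; have /existsP [i zi_neq0] : [exists i, z 0 i != 0].
  apply: contraR z_neq0 => /existsPn z0.
  by apply/eqP/rowP => i; rewrite mxE; exact/eqP/negbNE/z0.
pose w : 'rV[K]_n := (t / z 0 i) *: delta_mx 0 i.
have wz : dotv w z = t by rewrite dotvZl dotv_delta mulfVK.
have -> : [set v | dotv v z == t] = [set v + w | v in [set v | dotv v z == 0]].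
  apply/setP => v; rewrite inE; apply/eqP/imsetP => [vz | [u]].
    by exists (v - w); rewrite ?subrK // inE dotvBl vz wz subrr.
  by rewrite inE => /eqP uz ->; rewrite dotvDl uz wz add0r.
by rewrite card_imset //; apply: addIr.
Qed.

Lemma card_dotv_fibre n (z : 'rV[K]_n.+1) t : z != 0 ->
  #|[set v | dotv v z == t]| = (#|K| ^ n)%N.
Proof.
move=> z_neq0; rewrite card_dotv_fibre_translate //.
have := @sum_card_fibres _ _ [set: 'rV[K]_n.+1] [set: K] (fun v => dotv v z)
  (in1W (fun _ => in_setT _)).
rewrite (eq_bigr (fun=> #|[set v | dotv v z == 0]|)) => [|s _]; last first.
  by rewrite -(card_dotv_fibre_translate s z_neq0); apply: eq_card => v; rewrite !inE.
rewrite sum_nat_const !cardsT card_mx mul1n expnS => /eqP.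
have q_gt0 : (0 < #|K|)%N by apply/card_gt0P; exists 0.
by rewrite eqn_pmul2l // => /eqP.
Qed.

End Hyperplanes.

Section Collisions.
Variables (K : finFieldType) (n : nat) (F : {set 'rV[K]_n.+1}).
Local Notation q := #|K|.
Local Notation f := #|F|.

Definition collisions (v : 'rV[K]_n.+1) : nat :=
  \sum_(y in F) \sum_(y' in F) (dotv v y == dotv v y').

Definition dotv_fibre (v : 'rV[K]_n.+1) (t : K) : nat :=
  #|[set y in F | dotv v y == t]|.

Lemma collisions_sum_sqr v : collisions v = \sum_t dotv_fibre v t ^ 2.
Proof.
rewrite /dotv_fibre; under eq_bigr do rewrite card_sep_sum expnS expn1 big_distrl /=.
under eq_bigr do under eq_bigr do rewrite big_distrr /=.
rewrite exchange_big /=; apply: eq_bigr => y _.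
rewrite exchange_big /=; apply: eq_bigr => y' _.
rewrite (bigD1 (dotv v y)) //= big1 => [|t ht]; first by rewrite eqxx mul1n addn0 eq_sym.
by rewrite eq_sym (negbTE ht).
Qed.

Lemma sqr_card_le_collisions (P : {set K}) v : {in F, forall y, dotv v y \in P} ->
  f ^ 2 <= #|P| * collisions v.
Proof.
move=> vFP; have := sqr_sum_le_card_sum_sqr P (dotv_fibre v).
rewrite /dotv_fibre sum_card_fibres // => /leq_trans; apply.
rewrite leq_mul2l collisions_sum_sqr [X in _ <= X](bigID (mem P)) /=.
by rewrite leq_addr orbT.
Qed.

Lemma collisionsZ s v : s != 0%R -> collisions (s *: v) = collisions v.
Proof.
move=> s_neq0; apply: eq_bigr => y _; apply: eq_bigr => y' _.
by rewrite !dotvZl (inj_eq (mulfI s_neq0)).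
Qed.

Lemma sum_collisions : \sum_v collisions v = f * (q ^ n.+1 + f.-1 * q ^ n).
Proof.
rewrite exchange_big -sum_nat_const; apply: eq_bigr => y yF.
rewrite exchange_big /= (bigD1 y) //=; congr (_ + _).
  by under eq_bigr do rewrite eqxx; rewrite sum1_card card_mx mul1n.
rewrite (cardsD1 y F) yF /= -sum_nat_const.
apply: eq_big => [y' | y' /andP [_ y'y]]; first by rewrite !inE andbC.
have y'y_neq0 : (y - y' != 0)%R by rewrite subr_eq0 eq_sym.
rewrite -(card_dotv_fibre 0%R y'y_neq0).
rewrite -sum1dep_card [RHS]big_mkcond /=.
by apply: eq_bigr => v _; rewrite dotvBr subr_eq0; case: eqP.
Qed.

End Collisions.

Section Lines.
Variables (K : finFieldType) (n : nat).
Local Open Scope ring_scope.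
Implicit Types (x y : 'rV[K]_n) (E : {set 'rV[K]_n}).

Lemma linexZ s x : s != 0 -> linex (s *: x) = linex x.
Proof.
move=> s_neq0; apply/setP => v; apply/imsetP/imsetP => -[t]; rewrite inE => t_neq0 ->.
  by exists (t * s); rewrite ?inE ?mulf_neq0 // scalerA.
by exists (t / s); rewrite ?inE ?mulf_neq0 ?invr_eq0 // scalerA mulfVK.
Qed.

Lemma linex_self x : x \in linex x.
Proof. by apply/imsetP; exists 1; rewrite ?inE ?oner_neq0 ?scale1r. Qed.

Definition one_point_per_line E : Prop :=
  {in E, forall x, x != 0} /\ {in E &, forall x y, y \in linex x -> y = x}.

Lemma one_point_per_lineS E E' : E' \subset E ->
  one_point_per_line E -> one_point_per_line E'.
Proof.
move=> /subsetP sE'E [E_neq0 E_lines].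
by split=> [x /sE'E | x y /sE'E xE /sE'E yE]; [exact: E_neq0 | exact: E_lines].
Qed.

Lemma exists_line_representatives E : exists2 E1 : {set 'rV[K]_n}, E1 \subset E &
  one_point_per_line E1 /\ (#|E| <= 1 + \sum_(a in E1) #|E :&: linex a|)%N.
Proof.
pose E' := E :\ 0.
pose rep x := odflt x [pick y in E' | linex y == linex x].
have repP x : x \in E' -> rep x \in E' /\ linex (rep x) = linex x.
  move=> xE'; rewrite /rep; case: pickP => [y /andP [yE' /eqP] // | /(_ x)].
  by rewrite xE' eqxx.
exists (rep @: E').
  by apply/subsetP => _ /imsetP [x /repP [/setD1P [_ ?] _] ->].
split; first split.
- by move=> _ /imsetP [x /repP [/setD1P [? _] _] ->].
- move=> _ _ /imsetP [x xE' ->] /imsetP [y yE' ->] /imsetP [s].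
  rewrite inE => s_neq0 rep_y.
  suff lyx : linex y = linex x.
    by rewrite /rep lyx; case: pickP => // /(_ x); rewrite xE' eqxx.
  have [[_ <-] [_ <-]] := (repP x xE', repP y yE').
  by rewrite rep_y linexZ.
rewrite (cardsD1 0) -/E'; apply: leq_add; first by case: (_ \in _).
rewrite -(@sum_card_fibres _ _ E' (mem (rep @: E')) rep); last by move=> x ?; apply: imset_f.
apply: leq_sum => a _; apply: subset_leq_card; apply/subsetP => x.
rewrite inE => /andP [xE' /eqP <-]; have [_ ->] := repP x xE'.
by case/setD1P: xE' => _ xE; rewrite inE xE linex_self.
Qed.

Definition lines_union E : {set 'rV[K]_n} :=
  [set s *: x | s in [set s : K | s != 0], x in E].

Lemma sum_lines_union E (g : 'rV[K]_n -> nat) : one_point_per_line E ->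
  (forall s x, s != 0 -> g (s *: x) = g x) ->
  (\sum_(v in lines_union E) g v = #|K|.-1 * \sum_(x in E) g x)%N.
Proof.
move=> [E_neq0 E_lines] gZ; set Ks := [set s : K | s != 0].
have card_Ks : #|Ks| = #|K|.-1.
  by rewrite -(cardC1 (0 : K)); apply: eq_card => s; rewrite !inE.
have scale_inj : {in setX Ks E &, injective (uncurry (fun s x => s *: x))}.
  move=> [s x] [t y]; rewrite !in_setX !inE => /andP [s_neq0 xE] /andP [t_neq0 yE] /= sx_ty.
  have yx : y = x.
    apply: E_lines => //; apply/imsetP; exists (s / t); first by rewrite inE mulf_neq0 ?invr_eq0.
    by rewrite mulrC -scalerA sx_ty scalerA mulVf ?scale1r.
  move: sx_ty; rewrite yx => /eqP; rewrite -subr_eq0 -scalerBl scaler_eq0 subr_eq0.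
  by rewrite (negbTE (E_neq0 x xE)) orbF => /eqP ->.
rewrite /lines_union curry_imset2X (big_imset _ scale_inj) /=.
rewrite (eq_big (fun p => (p.1 \in Ks) && (p.2 \in E)) (fun p => g (p.1 *: p.2)));
  [ | by case=> ? ?; rewrite in_setX | by case].
rewrite -(pair_big (fun s => s \in Ks) (fun x => x \in E) (fun s x => g (s *: x))) /=.
rewrite (eq_bigr (fun=> \sum_(x in E) g x)) ?sum_nat_const ?card_Ks // => s.
by rewrite inE => s_neq0; apply: eq_bigr => x _; exact: gZ.
Qed.

End Lines.

Lemma card_prodset_ge (K : finFieldType) (n : nat) (E F : {set 'rV[K]_n.+1}) :
  one_point_per_line E -> #|K| ^ n.+1 <= #|E| * #|F| ->
  #|K| <= 2 * #|prodset E F|.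
Proof.
rewrite expnS => E_lines EF_large.
set q := #|K|; set e := #|E|; set f := #|F|; set N := q ^ n.
have {}EF_large : q * N <= e * f := EF_large.
set S := lines_union E; set A := \sum_(x in E) collisions F x.
set B := \sum_(v in ~: S) collisions F v.
have q_gt1 : 1 < q by apply/card_gt1P; exists 0%R, 1%R; rewrite eq_sym oner_neq0.
have N_gt0 : 0 < N by rewrite expn_gt0 ltnW.
have f_gt0 : 0 < f by nia.
have energy : q.-1 * A + B = f * (q * N + f.-1 * N).
  rewrite -expnS -sum_collisions (bigID (mem S)) /=; congr (_ + _).
    by rewrite sum_lines_union // => s v; apply: collisionsZ.
  by apply: eq_bigl => v; rewrite inE.
have card_notS : #|~: S| + q.-1 * e = q * N.
  have card_S : #|S| = q.-1 * e by rewrite -!sum1_card sum_lines_union // sum1_card.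
  by rewrite -card_S addnC cardsC card_mx mul1n expnS.
have B_ge : #|~: S| * f ^ 2 <= q * B.
  rewrite /B -sum_nat_const big_distrr /=; apply: leq_sum => v _.
  by rewrite /q -cardsT; apply: sqr_card_le_collisions => y _; rewrite inE.
have A_ge : e * f ^ 2 <= #|prodset E F| * A.
  rewrite /A /e big_distrr /= -sum_nat_const; apply: leq_sum => x xE.
  by apply: sqr_card_le_collisions => y yF; apply: imset2_f.
(* q A = q (energy - B) <= (q - 1)(f q N + e f^2) <= 2 (q - 1) e f^2. *)
have qA_le : q * A <= 2 * (e * f ^ 2).
  clearbody q e f N A B; case: q q_gt1 energy card_notS B_ge EF_large => // r r_gt0 /=.
  by case: f f_gt0 {A_ge} => // g _ /=; nia.
have ef_gt0 : 0 < e * f ^ 2 by nia.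
nia.
Qed.

Lemma exists_subset_card (T : finType) (A : {set T}) (k : nat) :
  k <= #|A| -> exists2 B : {set T}, B \subset A & #|B| = k.
Proof.
rewrite -bin_gt0 -cards_draws => /card_gt0P [B]; rewrite inE => /andP [BA /eqP cB].
by exists B.
Qed.

Local Open Scope R_scope.

Lemma INR_expn (a n : nat) : INR (a ^ n) = INR a ^ n.
Proof. by elim: n => [|n IH] //=; rewrite expnS mult_INR IH. Qed.

Lemma exists_nat_floor (b : R) : 0 <= b -> exists k : nat, b - 1 < INR k <= b.
Proof.
move=> b_ge0; have [up_gt up_le] := archimed b.
have up_gt0 : Z.lt 0 (up b) by apply: lt_0_IZR; lra.
exists (Z.to_nat (up b - 1)).
rewrite INR_IZR_INZ Z2Nat.id; last lia.
rewrite minus_IZR; lra.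
Qed.

Lemma exists_subset_card_between (T : finType) (A : {set T}) (a b : R) :
  0 <= a -> a + 1 <= b -> a <= INR #|A| ->
  exists2 B : {set T}, B \subset A & a <= INR #|B| <= b.
Proof.
move=> a_ge0 ab A_ge; have [k [k_gt k_le]] := exists_nat_floor (b := b) ltac:(lra).
have [B BA cB] := exists_subset_card (geq_minr k #|A|).
exists B => //; rewrite cB; split; last first.
  by apply: Rle_trans k_le; apply/le_INR/leP; exact: geq_minl.
by case: leqP => _; lra.
Qed.

Lemma INR_sum_le (T : finType) (A : {pred T}) (g : T -> nat) (L : R) :
  {in A, forall i, INR (g i) <= L} -> INR (\sum_(i in A) g i) <= INR #|A| * L.
Proof.
move=> gL; rewrite -sum1_card.
elim/big_rec2: _ => [|i s t iA IH]; first by rewrite /= Rmult_0_l; apply: Rle_refl.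
by rewrite !plus_INR Rmult_plus_distr_r Rmult_1_l; apply: Rplus_le_compat; [apply: gL|].
Qed.

Lemma exists_line_representatives_le (K : finFieldType) (n : nat)
    (E : {set 'rV[K]_n}) (L : R) :
  (forall x : 'rV[K]_n, x != 0%R -> INR #|E :&: linex x| <= L) ->
  exists2 E1 : {set 'rV[K]_n}, E1 \subset E &
    one_point_per_line E1 /\ INR #|E| <= 1 + INR #|E1| * L.
Proof.
move=> lines_le; have [E1 E1E [E1_lines cardE]] := exists_line_representatives E.
exists E1 => //; split => //; apply: Rle_trans (le_INR _ _ (elimT leP cardE)) _.
rewrite plus_INR; apply: Rplus_le_compat_l; apply: INR_sum_le => a aE1.
by apply: lines_le; case: E1_lines => E1_neq0 _; apply: E1_neq0.
Qed.

Lemma exists_one_point_per_line_subset (K : finFieldType) (n : nat)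
    (E : {set 'rV[K]_n}) (L b : R) :
  1 <= L -> (forall x : 'rV[K]_n, x != 0%R -> INR #|E :&: linex x| <= L) ->
  2 * L <= INR #|E| -> INR #|E| / (2 * L) + 1 <= b ->
  exists2 E0 : {set 'rV[K]_n}, E0 \subset E &
    one_point_per_line E0 /\ INR #|E| / (2 * L) <= INR #|E0| <= b.
Proof.
move=> L_ge1 lines_le E_ge b_ge.
have [E1 E1E [E1_lines E_le]] := exists_line_representatives_le lines_le.
have E1_ge : INR #|E| / (2 * L) <= INR #|E1|.
  apply: (Rmult_le_reg_r (2 * L)); first lra.
  rewrite /Rdiv Rmult_assoc Rinv_l ?Rmult_1_r; nra.
have E_div_ge0 : 0 <= INR #|E| / (2 * L).
  by apply: Rle_mult_inv_pos; [apply: pos_INR | lra].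
have [E0 E0E1 E0_card] := exists_subset_card_between E_div_ge0 b_ge E1_ge.
exists E0; first exact: subset_trans E0E1 E1E.
by split => //; apply: one_point_per_lineS E1_lines.
Qed.


Lemma exists_subset_large_prodset (K : finFieldType) (n : nat)
    (E F : {set 'rV[K]_n.+1}) (M t : R) :
  1 <= M -> 1 <= t ->
  (forall x : 'rV[K]_n.+1, x != 0%R -> INR #|E :&: linex x| <= M * t) ->
  2 * M * t * INR #|K| ^ n.+1 <= INR #|E| * INR #|F| ->
  exists2 E0 : {set 'rV[K]_n.+1}, E0 \subset E &
    / (2 * M) * / t * INR #|E| <= INR #|E0| <= / t * INR #|E| /\
    INR #|K| <= 2 * INR #|prodset E0 F|.
Proof.
move=> M_ge1 t_ge1 lines_le EF_large; set q := INR #|K| in EF_large *.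
have qD_gt0 : 0 < q ^ n.+1 by apply/pow_lt/lt_0_INR/leP/card_gt0P; exists 0%R.
have F_le : INR #|F| <= q ^ n.+1.
  by rewrite -INR_expn; apply/le_INR/leP; have := max_card (mem F); rewrite card_mx mul1n.
have E_ge : 2 * (M * t) <= INR #|E|.
  by have := Rmult_le_compat_l (INR #|E|) _ _ (pos_INR _) F_le; nra.
have E_div : INR #|E| / (2 * (M * t)) = / (2 * M) * (/ t * INR #|E|).
  by field; split; lra.
have window : INR #|E| / (2 * (M * t)) + 1 <= / t * INR #|E|.
  have Et_ge : 2 * M <= / t * INR #|E|.
    apply: (Rmult_le_reg_l t); first lra.
    by rewrite -[X in _ <= X]Rmult_assoc Rinv_r ?Rmult_1_l; lra.
  have : / (2 * M) <= / 2 by apply: Rinv_le_contravar; lra.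
  rewrite E_div; nra.
have [E0 E0E [E0_lines]] :=
  exists_one_point_per_line_subset (ltac:(nra) : 1 <= M * t) lines_le E_ge window.
rewrite E_div -Rmult_assoc => E0_card; exists E0 => //; split => //.
have EF0_large : (#|K| ^ n.+1 <= #|E0| * #|F|)%N.
  apply/leP/INR_le; rewrite mult_INR INR_expn -/q.
  apply: Rle_trans (Rmult_le_compat_r _ _ _ (pos_INR _) (proj1 E0_card)).
  rewrite (_ : _ * _ = / (2 * M * t) * (INR #|E| * INR #|F|)); last by field; split; lra.
  apply: (Rmult_le_reg_l (2 * M * t)); first nra.
  by rewrite -[X in _ <= X]Rmult_assoc Rinv_r ?Rmult_1_l; nra.
have /leP/le_INR := card_prodset_ge E0_lines EF0_large.
by rewrite mult_INR /q /=; lra.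
Qed.

Theorem lemma4p2 (d : nat) (C1 : R) :
  (2 <= d)%nat -> 0 < C1 ->
  exists C2 c c' C' : R,
    1 < C2 /\ 0 < c < 1 /\ 0 < c' /\ c' <= C' /\
    forall (K : finFieldType), char_gt2 K ->
    forall (E F : {set 'rV[K]_d}) (beta : R),
      0 <= beta <= 1 ->
      (forall x : 'rV[K]_d, x != 0%R ->
         INR #|E :&: linex x| <= C1 * Rpower (INR #|K|) beta) ->
      INR #|E| * INR #|F| >= C2 * Rpower (INR #|K|) (INR d + beta) ->
      exists E0 : {set 'rV[K]_d},
        E0 \subset E /\
        c' * Rpower (INR #|K|) (- beta) * INR #|E| <= INR #|E0| /\
        INR #|E0| <= C' * Rpower (INR #|K|) (- beta) * INR #|E| /\
        INR #|prodset E0 F| >= c * INR #|K|.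
Proof.
case: d => [//|d] _ C1_gt0; set M := Rmax 1 C1.
have [M_ge1 C1_le_M] : 1 <= M /\ C1 <= M by split; [apply: Rmax_l | apply: Rmax_r].
exists (2 * M), (1 / 2), (/ (2 * M)), 1.
do 2 (split; first lra); split; first by apply: Rinv_0_lt_compat; lra.
split; first by rewrite -Rinv_1; apply: Rinv_le_contravar; lra.
move=> K _ E F beta beta01 lines_le EF_large.
set q := INR #|K| in lines_le EF_large *; set t := Rpower q beta in lines_le *.
have q_ge2 : 2 <= q.
  rewrite /q (_ : 2 = INR 2) //; apply/le_INR/leP/card_gt1P.
  by exists 0%R, 1%R; rewrite eq_sym oner_neq0.
have t_ge1 : 1 <= t by rewrite /t -(Rpower_O q); [apply: Rle_Rpower | ]; lra.
have {}lines_le : forall x : 'rV[K]_d.+1, x != 0%R -> INR #|E :&: linex x| <= M * t.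
  by move=> x /lines_le lineC1; apply: Rle_trans lineC1 _; apply: Rmult_le_compat_r; lra.
have {}EF_large : 2 * M * t * q ^ d.+1 <= INR #|E| * INR #|F|.
  rewrite Rmult_assoc (Rmult_comm t) /t -Rpower_pow -?Rpower_plus; last lra.
  exact: Rge_le.
have [E0 E0E [[E0_ge E0_le] prodset_ge]] :=
  exists_subset_large_prodset M_ge1 t_ge1 lines_le EF_large.
exists E0; rewrite Rpower_Ropp -/t Rmult_1_l; do 3 (split => //).
by rewrite /q; lra.
Qed.
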